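(* Suppose Assumption 1 holds, and let $\lambda^0$ be a probability measure on $(\mathsf{X},\mathcal{B}(\mathsf{X}))$ with $\lambda^0\ll\mu_{\mathrm{pr}}$. Define the probability measure $\widehat\lambda^0$ on $(\mathsf{X}^2,\mathcal{B}(\mathsf{X}^2))$ by $\widehat\lambda^0(A)=\lambda^0(A_\Delta)$, where $A_\Delta=\{z\in\mathsf{X}:(z,z)\in A\}$. Then for every $\ell=1,\dots,\mathsf{L}$, $\widehat\lambda^0\ll\nu_\ell$, where $\nu_\ell$ is the unique invariant probability measure of the joint kernel $\bm p_\ell$.
   Context: Setting: $\mathsf{X}$ separable Banach space, prior $\mu_{\mathrm{pr}}$; posteriors $\mu^y_j$ with $\mu_{\mathrm{pr}}$-densities $\pi^y_j$; proposal density $Q_\ell$ w.r.t. $\mu_{\mathrm{pr}}$; $\alpha_j(\theta,z)=\min\{1,\frac{\pi^y_j(z)Q_\ell(\theta)}{\pi^y_j(\theta)Q_\ell(z)}\}$. Joint kernel for $\bm\theta_\ell=(\theta_{\ell,\ell-1},\theta_{\ell,\ell})$: $\bm p_\ell(\bm\theta_\ell,A)=\int\min\{\alpha_{\ell-1}(\theta_{\ell,\ell-1},z),\alpha_\ell(\theta_{\ell,\ell},z)\}\mathbf 1_{\{(z,z)\in A\}}Q_\ell(z)\mu_{\mathrm{pr}}(\mathrm{d}z)+\int(\alpha_{\ell-1}(\theta_{\ell,\ell-1},z)-\alpha_\ell(\theta_{\ell,\ell},z))^+\mathbf 1_{\{(z,\theta_{\ell,\ell})\in A\}}Q_\ell(z)\mu_{\mathrm{pr}}(\mathrm{d}z)+\int(\alpha_\ell(\theta_{\ell,\ell},z)-\alpha_{\ell-1}(\theta_{\ell,\ell-1},z))^+\mathbf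 1_{\{(\theta_{\ell,\ell-1},z)\in A\}}Q_\ell(z)\mu_{\mathrm{pr}}(\mathrm{d}z)+\mathbf 1_{\{\bm\theta_\ell\in A\}}(1-\int\max\{\alpha_{\ell-1}(\theta_{\ell,\ell-1},z),\alpha_\ell(\theta_{\ell,\ell},z)\}Q_\ell(z)\mu_{\mathrm{pr}}(\mathrm{d}z))$. Under Assumption 1 this kernel has a unique invariant probability measure $\nu_\ell$. Assumption 1: (1.1) $Q_\ell$ continuous and positive; (1.2) each $\pi^y_j$ continuous and positive; (1.3) for $j=\ell-1,\ell$, all $c_r>0$, $\{\theta: Q_\ell(\theta)/\pi^y_j(\theta)\le c_r\}$ compact; (1.4) $\exists c\in(0,1)$ independent of $\ell$ with $\operatorname{ess\,inf}_z Q_\ell(z)/\pi^y_j(z)\ge c$; (1.5) $\exists r>1,C_r$ independent of $\ell$ with $\int Q_\ell^r\mathrm{d}\mu_{\mathrm{pr}}\le C_r$. *)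

From HB Require Import structures.
From mathcomp Require Import all_boot all_order all_algebra.
From mathcomp Require Import all_classical all_reals all_analysis ess_sup_inf.
Set Implicit Arguments. Unset Strict Implicit. Unset Printing Implicit Defensive.
Import Order.TTheory GRing.Theory Num.Theory.
Import numFieldNormedType.Exports.
Local Open Scope classical_set_scope.
Local Open Scope ring_scope.

Definition borel (X : topologicalType) := g_sigma_algebraType (@open X).

Definition separable (X : topologicalType) :=
  exists S : set X, countable S /\ dense S.

Section MHkernel.
Context {R : realType} {X : completeNormedModType R}.

Definition alphaMH (pi Q : X -> R) (t z : X) : R :=
  Num.min 1 ((pi z * Q t) / (pi t * Q z)).

(* The joint (coupled) kernel p_l(theta, A) on X^2, with
   pi1 = pi_{l-1}, pi2 = pi_l, Q = Q_l, mu = mu_pr; (x)^+ = max(x,0). *)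
Definition jointKernel (mu : set (borel X) -> \bar R) (pi1 pi2 Q : X -> R)
    (th : borel X * borel X) (A : set (borel X * borel X)) : \bar R :=
  let a1 := fun z => alphaMH pi1 Q th.1 z in
  let a2 := fun z => alphaMH pi2 Q th.2 z in
  ((\int[mu]_z ((Num.min (a1 z) (a2 z)) * \1_A (z, z) * Q z)%:E)
   + (\int[mu]_z ((Num.max (a1 z - a2 z) 0) * \1_A (z, th.2) * Q z)%:E)
   + (\int[mu]_z ((Num.max (a2 z - a1 z) 0) * \1_A (th.1, z) * Q z)%:E)
   + (\1_A th)%:E * (1 - \int[mu]_z ((Num.max (a1 z) (a2 z)) * Q z)%:E))%E.

End MHkernel.

From HB Require Import structures.
From mathcomp Require Import all_boot all_order all_algebra.
From mathcomp Require Import all_classical all_reals all_analysis ess_sup_inf.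
From mathcomp Require Import measurable_realfun ring lra.
Set Implicit Arguments. Unset Strict Implicit. Unset Printing Implicit Defensive.
Import Order.TTheory GRing.Theory Num.Theory.
Import numFieldNormedType.Exports.
Local Open Scope classical_set_scope.
Local Open Scope ring_scope.
Import HBNNSimple.

(* Since lambda^0 << mu_pr, it suffices to show that nu(A) = 0 forces
   mu_pr(A_Delta) = 0.  Put M = n+1 and consider the "box" K_n of states
   theta with pi_{l-1}(theta_1) <= M Q(theta_1), pi_l(theta_2) <= M Q(theta_2),
   and the set C_n of proposals z with Q(z) <= M pi_j(z) (j = l-1, l) and
   Q(z) >= 1/M.  On these sets both acceptance probabilities are >= M^-2, so
   the synchronized part of the kernel gives, for theta in K_n,
       p(theta, A) >= M^-3 mu_pr(A_Delta `&` C_n).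
   Integrating against nu and using invariance, 0 = nu(A) >= M^-3 mu_pr(A_Delta
   `&` C_n) nu(K_n).  Both sequences of sets increase and exhaust the whole
   space resp. A_Delta (by positivity of the densities), so for n large both
   factors are positive unless mu_pr(A_Delta) = 0. *)

Section measure_facts.
Local Open Scope ereal_scope.
Context d (T : measurableType d) (R : realType).
Variable mu : {measure set T -> \bar R}.

(* Monotonicity of the integral of nonnegative functions, without any
   measurability assumption (the kernel's integrands are not known to be
   measurable a priori). *)
Lemma ge0_le_integral_any (f g : T -> \bar R) :
  (forall x, 0 <= f x) -> (forall x, f x <= g x) ->
  \int[mu]_x f x <= \int[mu]_x g x.
Proof.
move=> f0 fg; rewrite !ge0_integralTE //; last by move=> x; exact: le_trans (fg x).
apply: ge_ereal_sup => _ [h hf <-]; apply: le_ereal_sup_tmp.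
by exists (sintegral mu h) => //; exists h => // x; exact: le_trans (hf x) (fg x).
Qed.

Lemma integral_scaled_indic (k : \bar R) (D : set T) : 0 <= k -> measurable D ->
  \int[mu]_x (k * (\1_D x)%:E) = k * mu D.
Proof.
move=> k0 mD; rewrite ge0_integralZl //.
- by rewrite integral_indic // setIT.
- exact/measurable_EFinP/measurable_indic.
Qed.

Lemma eventually_measure_gt0 (D : set T) (F : nat -> set T) :
  measurable D -> (forall n, measurable (F n)) ->
  {homo F : n m / (n <= m)%N >-> n `<=` m} ->
  (forall x, D x -> \forall n \near \oo, F n x) ->
  0 < mu D -> \forall n \near \oo, 0 < mu (F n).
Proof.
move=> mD mF F_mono DF muD.
have D_sub : D `<=` \bigcup_n F n by move=> x /DF /filter_ex[n Fnx]; exists n.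
have UF_neq0 : mu (\bigcup_n F n) != 0.
  rewrite gt_eqF // (lt_le_trans muD) // le_measure ?inE //.
  exact: bigcupT_measurable.
have [N muN] : exists N, mu (F N) != 0.
  apply: contrapT => F_null; move/eqP: UF_neq0; apply.
  apply/(negligibleP mu (bigcupT_measurable _ mF)).1.
  apply: negligible_bigcup => n; apply/(negligibleP mu (mF n)).2.
  by apply: (contra_notP _ F_null) => nz; exists n; exact/eqP.
exists N => // n /= Nn; rewrite lt0e measure_ge0 andbT.
apply: contra muN => /eqP mu0; rewrite -measure_le0 -mu0.
by apply: le_measure; rewrite ?inE //; exact: F_mono.
Qed.

End measure_facts.

Definition diag {d} {T : measurableType d} (z : T) : T * T := (z, z).

Lemma measurable_diag d (T : measurableType d) : measurable_fun setT (@diag d T).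
Proof. by apply: measurable_fun_pair; exact: measurable_id. Qed.

Lemma closed_borel (X : ptopologicalType) (C : set (borel X)) :
  closed (C : set X) -> measurable C.
Proof.
move=> cC; rewrite -[C]setCK; apply: measurableC.
by apply: sub_sigma_algebra; exact: closed_openC.
Qed.

Section dominated_sets.
Context {R : realType} {X : topologicalType}.
Implicit Types f g : X -> R.

Definition dominated (f g : X -> R) (n : nat) : set X :=
  [set x | f x <= n.+1%:R * g x].

Lemma dominated_closed f g n : continuous f -> continuous g ->
  closed (dominated f g n).
Proof.
move=> cf cg; have -> : dominated f g n =
    (fun x => n.+1%:R * g x - f x) @^-1` [set y | 0 <= y].
  by apply/seteqP; split => x /=; rewrite subr_ge0.
apply: (preimage_closed _ (@closed_ge R 0)) => x _.
by apply: cvgB; [apply: cvgM; [exact: cvg_cst|exact: cg]|exact: cf].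
Qed.

Lemma dominated_mono {f g n m} : (forall x, 0 <= g x) -> (n <= m)%N ->
  dominated f g n `<=` dominated f g m.
Proof.
move=> g0 nm x /= fx; apply: le_trans fx _.
by rewrite ler_wpM2r // ler_nat ltnS.
Qed.

Lemma dominated_eventually f g x : 0 < g x ->
  \forall n \near \oo, dominated f g n x.
Proof.
move=> gx; exists (Num.bound `|f x / g x|) => // n /= Nn.
rewrite /dominated /= -ler_pdivrMr //.
have bound_gt := archi_boundP (normr_ge0 (f x / g x)).
apply: le_trans (ler_norm (f x / g x)) _.
apply/ltW/(lt_le_trans bound_gt).
by rewrite ler_nat; exact: leqW.
Qed.

End dominated_sets.

Section acceptance_bounds.
Context {R : realType} {X : completeNormedModType R}.
Variables (p q : X -> R).
Hypotheses (p_gt0 : forall x, 0 < p x) (q_gt0 : forall x, 0 < q x).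

Lemma alphaMH_ge0 t z : 0 <= alphaMH p q t z.
Proof. by rewrite /alphaMH le_min ler01 divr_ge0 // mulr_ge0 // ltW. Qed.

Lemma alphaMH_le1 t z : alphaMH p q t z <= 1.
Proof. by rewrite /alphaMH ge_min lexx. Qed.

Lemma alphaMH_lb t z (M : R) : 1 <= M ->
  p t <= M * q t -> q z <= M * p z -> M^-1 ^+ 2 <= alphaMH p q t z.
Proof.
move=> M1 pt qz; have M0 : 0 < M by lra.
move: (p_gt0 t) (p_gt0 z) (q_gt0 t) (q_gt0 z) => pt0 pz0 qt0 qz0.
rewrite /alphaMH le_min expr_le1 ?invr_ge0 ?invf_le1 ?M1 ?(ltW M0) //=.
rewrite ler_pdivlMr ?mulr_gt0 //.
have pq : p t * q z <= (M * q t) * (M * p z) by apply: ler_pM => //; exact: ltW.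
apply: le_trans (ler_wpM2l _ pq) _; first by rewrite exprn_ge0 // invr_ge0 ltW.
suff -> : M^-1 ^+ 2 * (M * q t * (M * p z)) = p z * q t by [].
by field; lra.
Qed.

End acceptance_bounds.

Section joint_kernel_lower_bound.
Local Open Scope ereal_scope.
Context {R : realType} {X : completeNormedModType R}.
Variable mu : {measure set (borel X) -> \bar R}.
Variables (p1 p2 q : X -> R).
Hypotheses (p1_cont : continuous p1) (p2_cont : continuous p2)
  (q_cont : continuous q).
Hypotheses (p1_gt0 : forall x, (0 < p1 x)%R) (p2_gt0 : forall x, (0 < p2 x)%R)
  (q_gt0 : forall x, (0 < q x)%R).
Hypothesis q_int_le1 : \int[mu]_z (q z)%:E <= 1.

Let kernel := jointKernel mu p1 p2 q.
Let ge0_p1 x : (0 <= p1 x)%R := ltW (p1_gt0 x).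
Let ge0_p2 x : (0 <= p2 x)%R := ltW (p2_gt0 x).
Let ge0_q x : (0 <= q x)%R := ltW (q_gt0 x).
Let alpha1_ge0 t z : (0 <= alphaMH p1 q t z)%R := alphaMH_ge0 p1_gt0 q_gt0 t z.
Let alpha2_ge0 t z : (0 <= alphaMH p2 q t z)%R := alphaMH_ge0 p2_gt0 q_gt0 t z.

Definition state_box (n : nat) : set (borel X * borel X) :=
  dominated p1 q n `*` dominated p2 q n.

Definition proposal_set (n : nat) : set (borel X) :=
  dominated q p1 n `&` dominated q p2 n `&` dominated (cst 1%R) q n.

Lemma state_box_measurable n : measurable (state_box n).
Proof. by apply: measurableX; apply: closed_borel; exact: dominated_closed. Qed.

Lemma proposal_set_measurable n : measurable (proposal_set n).
Proof.
by apply: measurableI; [apply: measurableI|]; apply: closed_borel;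
  apply: dominated_closed => //; exact: cst_continuous.
Qed.

Lemma state_box_mono : {homo state_box : n m / (n <= m)%N >-> n `<=` m}.
Proof.
by move=> n m nm th [/= h1 h2]; split; apply: dominated_mono ge0_q nm _ _.
Qed.

Lemma proposal_set_mono : {homo proposal_set : n m / (n <= m)%N >-> n `<=` m}.
Proof.
move=> n m nm z [[h1 h2] h3]; split; [split|].
- exact: dominated_mono ge0_p1 nm _ h1.
- exact: dominated_mono ge0_p2 nm _ h2.
- exact: dominated_mono ge0_q nm _ h3.
Qed.

Lemma state_box_eventually th : \forall n \near \oo, state_box n th.
Proof. by apply: filterI; apply: dominated_eventually. Qed.

Lemma proposal_set_eventually z : \forall n \near \oo, proposal_set n z.
Proof. by apply: filterI; [apply: filterI|]; apply: dominated_eventually. Qed.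

(* The kernel dominates its synchronized part, where both chains accept z;
   the other three terms are nonnegative, the rejection term because the
   proposal has mass at most one. *)
Lemma jointKernel_ge_synchronized th A :
  \int[mu]_z ((Num.min (alphaMH p1 q th.1 z) (alphaMH p2 q th.2 z))
                * \1_A (z, z) * q z)%:E <= kernel th A.
Proof.
have int_ge0 (f : X -> R) : (forall z, 0 <= f z)%R -> 0 <= \int[mu]_z (f z)%:E.
  by move=> f0; apply: integral_ge0 => z _; rewrite lee_fin.
rewrite /kernel /jointKernel /=.
apply: le_trans (leeDl _ _); last first.
  apply: mule_ge0; first by rewrite lee_fin indicE ler0n.
  rewrite sube_ge0 ?orbT //; apply: le_trans q_int_le1.
  apply: ge0_le_integral_any => z; rewrite lee_fin ?mulr_ge0 ?le_max ?alpha1_ge0 //.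
  by rewrite ler_piMl // ge_max !alphaMH_le1.
apply: le_trans (leeDl _ _); last first.
  by apply: int_ge0 => z; rewrite !mulr_ge0 // ?le_max ?lexx ?orbT // indicE ler0n.
apply: leeDl.
by apply: int_ge0 => z; rewrite !mulr_ge0 // ?le_max ?lexx ?orbT // indicE ler0n.
Qed.

Lemma jointKernel_ge0 th A : 0 <= kernel th A.
Proof.
apply: le_trans (jointKernel_ge_synchronized th A); apply: integral_ge0 => z _.
by rewrite lee_fin !mulr_ge0 ?indicE ?ler0n // le_min alpha1_ge0 alpha2_ge0.
Qed.

Lemma jointKernel_ge_diag n A th : measurable A -> state_box n th ->
  ((n.+1%:R^-1 ^+ 3)%:E * mu (diag @^-1` A `&` proposal_set n) <= kernel th A).
Proof.
move=> mA [/= th1 th2]; set e := (n.+1%:R^-1)%R; set B := _ `&` proposal_set n.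
have e_ge0 : (0 <= e)%R by rewrite invr_ge0.
have mB : measurable B.
  apply: measurableI; last exact: proposal_set_measurable.
  by rewrite -[_ @^-1` _]setTI; exact: measurable_diag.
apply: le_trans (jointKernel_ge_synchronized th A).
rewrite -integral_scaled_indic //; last by rewrite lee_fin exprn_ge0.
apply: ge0_le_integral_any => z.
  by rewrite -EFinM lee_fin mulr_ge0 ?exprn_ge0 // indicE ler0n.
rewrite -EFinM lee_fin indicE; have [zB|zB] := boolP (z \in B); last first.
  by rewrite mulr0 !mulr_ge0 // ?indicE ?ler0n // le_min alpha1_ge0 alpha2_ge0.
move: (zB); rewrite inE => -[Az [[qz1 qz2] qz]].
have M1 : (1 <= n.+1%:R :> R)%R by rewrite ler1n.
have qe : (e <= q z)%R by rewrite /e -[(_^-1)%R]mulr1 ler_pdivrMl.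
rewrite mulr1 indicE mem_set // mulr1 exprSr.
apply: ler_pM => //; first exact: exprn_ge0.
by rewrite le_min !alphaMH_lb.
Qed.

Lemma invariant_null_diag (nu : {measure set (borel X * borel X) -> \bar R}) :
  0 < nu setT ->
  (forall A, measurable A -> \int[nu]_th kernel th A = nu A) ->
  forall A, measurable A -> nu A = 0 -> mu (diag @^-1` A) = 0.
Proof.
move=> nu_gt0 inv A mA nuA0.
have mAd : measurable (diag @^-1` A).
  by rewrite -[_ @^-1` _]setTI; exact: measurable_diag.
apply/eqP; rewrite eq_le measure_ge0 andbT leNgt; apply/negP => muA.
have box_gt0 : \forall n \near \oo, 0 < nu (state_box n).
  apply: (eventually_measure_gt0 measurableT state_box_measurable state_box_mono) => //.
  by move=> th _; exact: state_box_eventually.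
have diag_gt0 : \forall n \near \oo, 0 < mu (diag @^-1` A `&` proposal_set n).
  apply: (eventually_measure_gt0 mAd) => //.
  - by move=> n; apply: measurableI => //; exact: proposal_set_measurable.
  - by move=> n m nm; apply: setIS; exact: proposal_set_mono.
  - by move=> z Az; apply: filterS (proposal_set_eventually z) => n Cz.
have [n [/= boxn diagn]] := filter_ex (filterI box_gt0 diag_gt0).
set c := (n.+1%:R^-1 ^+ 3)%:E * mu (diag @^-1` A `&` proposal_set n).
have c_gt0 : 0 < c by rewrite mule_gt0 // lte_fin exprn_gt0.
have cK_le : c * nu (state_box n) <= nu A.
  rewrite -(inv A mA) -(integral_scaled_indic _ (ltW c_gt0) (state_box_measurable n)).
  apply: ge0_le_integral_any => th.
    by rewrite mule_ge0 ?(ltW c_gt0) // lee_fin indicE ler0n.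
  rewrite indicE; have [|_] := boolP (th \in state_box n); last first.
    by rewrite mule0; exact: jointKernel_ge0.
  by rewrite inE mule1; exact: jointKernel_ge_diag.
by move: cK_le; rewrite nuA0 leNgt mule_gt0.
Qed.

End joint_kernel_lower_bound.

Theorem mainTheorem7 (R : realType) (X : completeNormedModType R)
  (mu_pr : probability (borel X) R)
  (L : nat) (pi : nat -> X -> R) (Q : nat -> X -> R)
  (Xsep : separable X)
  (pi_dens : forall j, (j <= L)%N ->
     (forall x, 0 <= pi j x) /\ (\int[mu_pr]_z (pi j z)%:E = 1)%E)
  (Q_dens : forall l, (1 <= l <= L)%N ->
     (forall x, 0 <= Q l x) /\ (\int[mu_pr]_z (Q l z)%:E = 1)%E)
  (A11 : forall l, (1 <= l <= L)%N -> continuous (Q l) /\ forall x, 0 < Q l x)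
  (A12 : forall j, (j <= L)%N -> continuous (pi j) /\ forall x, 0 < pi j x)
  (A13 : forall l, (1 <= l <= L)%N -> forall j, (j = l.-1 \/ j = l) ->
     forall cr : R, 0 < cr -> compact [set t : X | Q l t / pi j t <= cr])
  (A14 : exists c : R, 0 < c < 1 /\
     forall l, (1 <= l <= L)%N -> forall j, (j = l.-1 \/ j = l) ->
       (c%:E <= ess_inf mu_pr (fun z : borel X => (Q l z / pi j z)%:E))%E)
  (A15 : exists (r Cr : R), 1 < r /\
     forall l, (1 <= l <= L)%N ->
       (\int[mu_pr]_z ((Q l z) `^ r)%:E <= Cr%:E)%E)
  (lam0 : probability (borel X) R)
  (lam0_ac : lam0 `<< mu_pr) :
  forall l, (1 <= l <= L)%N ->
  forall nu : probability (borel X * borel X)%type R,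
    (forall A : set (borel X * borel X), measurable A ->
       \int[nu]_th jointKernel mu_pr (pi l.-1) (pi l) (Q l) th A = nu A)%E ->
    pushforward lam0 (fun z : borel X => (z, z) : (borel X * borel X)%type)
      `<< nu.
Proof.
move=> l l_range nu invariant; have /andP[_ l_le] := l_range.
have [q_cont q_gt0] := A11 l l_range.
have [p1_cont p1_gt0] := A12 l.-1 (leq_trans (leq_pred l) l_le).
have [p2_cont p2_gt0] := A12 l l_le.
have q_int : (\int[mu_pr]_z (Q l z)%:E <= 1)%E by rewrite (Q_dens l l_range).2.
apply/null_content_dominatesP => A mA nuA0.
apply: (null_content_dominatesP _ _).1 lam0_ac _ _ _.
  by rewrite -[_ @^-1` _]setTI; exact: measurable_diag.
apply: (invariant_null_diag p1_cont p2_cont q_cont p1_gt0 p2_gt0 q_gt0 q_int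
  (nu := nu)) => //.
by have := lte01 (R := R); rewrite -(probability_setT nu).
Qed.
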